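(* Every $\Delta$-matroid representable over a finite field of characteristic two is strong.
   Context: A $\Delta$-matroid is a pair $(E,\mathcal{B})$, $E$ finite, $\mathcal{B}$ a nonempty family of subsets, such that for all $B,B'\in\mathcal{B}$ and $x\in B\triangle B'$ there is $y\in B\triangle B'$ with $B\triangle\{x,y\}\in\mathcal{B}$; it is strong if such $y$ can always be chosen with both $B\triangle\{x,y\},B'\triangle\{x,y\}\in\mathcal{B}$. For a symmetric or skew-symmetric matrix $\mathbf{A}$ over a field $K$ indexed by $E$, $D(\mathbf{A})=(E,\{I\subseteq E:\mathbf{A}[I]\text{ nonsingular}\})$ (the empty principal submatrix counts as nonsingular). For $X\subseteq E$, the twist $D*X$ has bases $\{B\triangle X:B\in\mathcal{B}\}$. $D$ is representable over $K$ if $D=D(\mathbf{A})*X$ for some symmetric or skew-symmetric matrix $\mathbf{A}$ over $K$ and some $X\subseteq E$. *)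

From HB Require Import structures.
From mathcomp Require Import all_boot all_order all_algebra all_field.
Set Implicit Arguments. Unset Strict Implicit. Unset Printing Implicit Defensive.
Import GRing.Theory.
Local Open Scope ring_scope.

Definition symdiff (T : finType) (A B : {set T}) : {set T} :=
  (A :\: B) :|: (B :\: A).

Section DeltaMatroids.
Variable E : finType.

Definition delta_matroid (B : {set {set E}}) : Prop :=
  B != set0 /\
  forall B1 B2 x, B1 \in B -> B2 \in B -> x \in symdiff B1 B2 ->
    exists y, y \in symdiff B1 B2 /\ symdiff B1 [set x; y] \in B.

Definition strong_delta_matroid (B : {set {set E}}) : Prop :=
  B != set0 /\
  forall B1 B2 x, B1 \in B -> B2 \in B -> x \in symdiff B1 B2 ->
    exists y, y \in symdiff B1 B2 /\
      symdiff B1 [set x; y] \in B /\ symdiff B2 [set x; y] \in B.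

Definition twist (B : {set {set E}}) (X : {set E}) : {set {set E}} :=
  [set symdiff Bs X | Bs in B].

Variable K : fieldType.

Definition symmetric_mx (A : E -> E -> K) : Prop :=
  forall i j, A i j = A j i.

(* Skew-symmetric: A^T = -A with zero diagonal (Bouchet's convention). *)
Definition skew_symmetric_mx (A : E -> E -> K) : Prop :=
  (forall i j, A j i = - A i j) /\ (forall i, A i i = 0).

Definition principal_submx (A : E -> E -> K) (I : {set E}) : 'M[K]_#|I| :=
  \matrix_(i < #|I|, j < #|I|) A (enum_val i) (enum_val j).

(* A[I] nonsingular; the empty principal submatrix has det 1. *)
Definition nonsingular_principal (A : E -> E -> K) (I : {set E}) : bool :=
  \det (principal_submx A I) != 0.

Definition DA (A : E -> E -> K) : {set {set E}} :=
  [set I : {set E} | nonsingular_principal A I].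

Definition representable_over (B : {set {set E}}) : Prop :=
  exists (A : E -> E -> K) (X : {set E}),
    (symmetric_mx A \/ skew_symmetric_mx A) /\ B = twist (DA A) X.

End DeltaMatroids.

From HB Require Import structures.
From mathcomp Require Import all_boot all_order all_algebra all_field all_fingroup.
From mathcomp Require Import ring.
Set Implicit Arguments. Unset Strict Implicit. Unset Printing Implicit Defensive.
Import GRing.Theory.
Local Open Scope ring_scope.

(* In characteristic two skew-symmetric matrices are symmetric and twisting
   preserves strongness, so it suffices to show that D(A) is strong for a
   symmetric A.  Let B1, B2 be bases and x ∈ U = B1 Δ B2.  The principal pivot
   A1 = A * B1 is again symmetric (here characteristic two is used), and A1[T]
   is nonsingular iff T Δ B1 is a basis; so A1[U] is nonsingular and its
   inverse is the principal submatrix on U of the symmetric pivot A2 = A1 * U.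
   For symmetric mutually inverse a, b in characteristic two every x has a
   partner y with a[{x,y}] and b[{x,y}] both nonsingular: if a_xx = 0, the
   Frobenius map gives Σ_y a_xy^2 det b[{x,y}] = 1.  Pivoting back,
   {x,y} ∈ D(A1) and {x,y} ∈ D(A2) say that B1 Δ {x,y} and B2 Δ {x,y} are
   bases. *)

Section SymmetricDifference.
Variable T : finType.
Implicit Types A B C : {set T}.

Lemma in_symdiff A B x : (x \in symdiff A B) = (x \in A) (+) (x \in B).
Proof. by rewrite /symdiff !inE; case: (x \in A); case: (x \in B). Qed.

Lemma symdiffC A B : symdiff A B = symdiff B A.
Proof. by apply/setP => x; rewrite !in_symdiff addbC. Qed.

Lemma symdiffA A B C : symdiff A (symdiff B C) = symdiff (symdiff A B) C.
Proof. by apply/setP => x; rewrite !in_symdiff addbA. Qed.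

Lemma symdiffKl A B : symdiff A (symdiff A B) = B.
Proof. by apply/setP => x; rewrite !in_symdiff addKb. Qed.

Lemma symdiff_twist A B C : symdiff (symdiff A C) (symdiff B C) = symdiff A B.
Proof. by apply/setP => x; rewrite !in_symdiff addbACA addbb addbF. Qed.

End SymmetricDifference.

Lemma strong_delta_matroid_twist (E : finType) (B : {set {set E}}) (X : {set E}) :
  strong_delta_matroid B -> strong_delta_matroid (twist B X).
Proof.
case=> nzB exchangeB; split; first by rewrite imset_eq0.
move=> _ _ x /imsetP[C1 C1B ->] /imsetP[C2 C2B ->].
rewrite symdiff_twist => xC.
have [y [yC [C1xy C2xy]]] := exchangeB _ _ _ C1B C2B xC.
exists y; rewrite -!symdiffA !(symdiffC X) !symdiffA.
by split=> //; split; apply: imset_f.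
Qed.

Lemma sum_symmetric_pchar2 (R : nzSemiRingType) (I : finType) (U : {set I})
    (f : I -> I -> R) :
  2%N \in [pchar R] -> (forall y z, f y z = f z y) ->
  \sum_(y in U) \sum_(z in U) f y z = \sum_(y in U) f y y.
Proof.
move=> char2 symf; have [m] := ubnP #|U|; elim: m U => // m IHm U ltUm.
have [->|[w wU]] := set_0Vmem U; first by rewrite !big_set0.
under eq_bigr => y _ do rewrite (big_setD1 w wU) /=.
rewrite big_split /= !(big_setD1 w wU) /= IHm; last first.
  by rewrite (cardsD1 w) wU in ltUm.
rewrite -addrA; congr (_ + _); rewrite addrA -[RHS]add0r; congr (_ + _).
under eq_bigr => y _ do rewrite symf.
exact: addrr_pchar2.
Qed.

Section SmallDeterminants.
Variable K : fieldType.

Lemma det_mx1 m (M : 'M[K]_m) (i : 'I_m) : m = 1%N -> \det M = M i i.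
Proof. by move=> m1; subst m; rewrite det_mx11 (ord1 i). Qed.

Lemma det_mx2 m (M : 'M[K]_m) (i0 i1 : 'I_m) : m = 2%N -> i0 != i1 ->
  \det M = M i0 i0 * M i1 i1 - M i0 i1 * M i1 i0.
Proof.
move=> m2; subst m.
have liftE (i : 'I_2) (j : 'I_1) : lift i j = (if val i == 0%N then 1 else 0).
  by apply: val_inj; case: i => [[|[|]]] //=; rewrite (ord1 j).
have det2 : \det M = M 0 0 * M 1 1 - M 0 1 * M 1 0.
  rewrite (expand_det_row _ 0) !big_ord_recl big_ord0 addr0 /cofactor !det_mx11 !mxE.
  by rewrite !liftE /=; ring.
have ord2 (i : 'I_2) : (i == 0) || (i == 1) by case: i => [[|[|]]].
by case/orP: (ord2 i0) => /eqP->; case/orP: (ord2 i1) => /eqP-> //= _; rewrite det2; ring.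
Qed.

Lemma det_reindex m n (M : 'M[K]_n) (h : 'I_m -> 'I_n) : m = n -> injective h ->
  \det (\matrix_(i, j) M (h i) (h j)) = \det M.
Proof.
move=> eq_mn injh; subst m; pose s := perm injh.
have -> : \matrix_(i, j) M (h i) (h j) = row_perm s (col_perm s M).
  by apply/matrixP => i j; rewrite !mxE !permE.
rewrite row_permE col_permE !det_mulmx !det_perm odd_permV.
by rewrite mulrCA -signr_addb addbb expr0 mulr1.
Qed.

End SmallDeterminants.

Section PrincipalPivot.
Variables (K : fieldType) (E : finType).
Implicit Types (A a b : E -> E -> K) (T X U : {set E}).

Definition mx_of_fun A : 'M[K]_#|E| := \matrix_(i, j) A (enum_val i) (enum_val j).

Definition row_replace A T : 'M[K]_#|E| :=
  \matrix_(i, j) if enum_val i \in T then A (enum_val i) (enum_val j) else (i == j)%:R.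

Lemma row_row_replace A T i :
  row i (row_replace A T) = if enum_val i \in T then row i (mx_of_fun A) else row i 1%:M.
Proof. by apply/rowP => j; rewrite !mxE; case: (enum_val i \in T); rewrite !mxE. Qed.

Lemma row_replace_mulmx_out A T (M : 'M[K]_#|E|) i j : enum_val i \notin T ->
  (row_replace A T *m M) i j = M i j.
Proof.
move=> iT; rewrite mxE (bigD1 i) //= big1 => [|k ki]; rewrite mxE (negbTE iT).
  by rewrite eqxx mul1r addr0.
by rewrite eq_sym (negbTE ki) mul0r.
Qed.

Lemma row_replace0 A : row_replace A set0 = 1%:M.
Proof. by apply/matrixP => i j; rewrite !mxE inE. Qed.

Lemma det_principal_submx A T : \det (principal_submx A T) = \det (row_replace A T).
Proof.
pose v (k : 'I_(#|T| + #|~: T|)) : E :=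
  match split k with inl i => enum_val i | inr j => enum_val j end.
have injv : injective v.
  move=> k1 k2; rewrite /v -(splitK k1) -(splitK k2) !unsplitK.
  case: (split k1) => a; case: (split k2) => b /= eab; try by rewrite (enum_val_inj eab).
    by have := enum_valP b; rewrite !inE -eab enum_valP.
  by have := enum_valP a; rewrite !inE eab enum_valP.
rewrite -(det_reindex (row_replace A T) (cardsC T) (inj_comp (@enum_rank_inj E) injv)).
have -> : \matrix_(i, j) row_replace A T (enum_rank (v i)) (enum_rank (v j)) =
    block_mx (principal_submx A T)
      (\matrix_(i < #|T|, j < #|~: T|) A (enum_val i) (enum_val j)) 0 1%:M.
  apply/matrixP => i j; rewrite -(splitK i) -(splitK j) mxE /v !unsplitK.
  case: (split i) => a; case: (split j) => b; rewrite [LHS]mxE !enum_rankK.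
  - by rewrite block_mxEul mxE enum_valP.
  - by rewrite block_mxEur mxE enum_valP.
  - rewrite block_mxEdl mxE (inj_eq enum_rank_inj).
    have := enum_valP a; rewrite inE => /negbTE ->.
    by case: eqP => // eab; have := enum_valP a; rewrite inE eab enum_valP.
  - rewrite block_mxEdr mxE (inj_eq enum_rank_inj) (inj_eq enum_val_inj).
    by have := enum_valP a; rewrite inE => /negbTE ->.
by rewrite det_ublock det1 mulr1.
Qed.

Lemma in_DA A T : (T \in DA A) = (\det (row_replace A T) != 0).
Proof. by rewrite inE /nonsingular_principal det_principal_submx. Qed.

(* Tucker's principal pivot A * X, computed as S Q^-1 with Q = row_replace A X
   and S = row_replace A (~: X), which avoids splitting A into blocks along X. *)
Definition pivot A X : E -> E -> K := fun e f =>
  (row_replace A (~: X) *m invmx (row_replace A X)) (enum_rank e) (enum_rank f).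

Lemma mx_of_pivot A X :
  mx_of_fun (pivot A X) = row_replace A (~: X) *m invmx (row_replace A X).
Proof. by apply/matrixP => i j; rewrite mxE /pivot !enum_valK. Qed.

Lemma det_pivot A X T : \det (row_replace A X) != 0 ->
  \det (row_replace (pivot A X) T) * \det (row_replace A X) =
  \det (row_replace A (symdiff T X)).
Proof.
move=> nzQ; have unitQ : row_replace A X \in unitmx by rewrite unitmxE unitfE.
rewrite -det_mulmx; congr (\det _); apply/row_matrixP => i.
rewrite row_mul !row_row_replace in_symdiff mx_of_pivot.
case: (enum_val i \in T) => /=.
  by rewrite -row_mul mulmxKV // row_row_replace inE.
by rewrite -row_mul mul1mx row_row_replace.
Qed.

Lemma row_replace_trmx_mul A X i j :
  ((row_replace A X)^T *m row_replace A (~: X)) i j =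
    (if enum_val j \in X then A (enum_val j) (enum_val i) else 0) +
    (if enum_val i \in X then 0 else A (enum_val i) (enum_val j)).
Proof.
pose F (k : 'I_#|E|) := if enum_val k \in X then A (enum_val k) (enum_val i) else 0.
pose G (k : 'I_#|E|) := if enum_val k \in X then 0 else A (enum_val k) (enum_val j).
have pick (H : 'I_#|E| -> K) l : \sum_k H k *+ (k == l) = H l.
  by rewrite (bigD1 l) //= eqxx big1 ?addr0 // => k /negbTE ->.
transitivity (\sum_k (F k *+ (k == j) + G k *+ (k == i))).
  rewrite mxE; apply: eq_bigr => k _; rewrite !mxE inE /F /G.
  by case: (enum_val k \in X); rewrite /= ?mulr_natl ?mulr_natr mul0rn ?addr0 ?add0r.
by rewrite big_split /= !pick.
Qed.

Definition inverse_on (U : {set E}) (a b : E -> E -> K) : Prop :=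
  {in U &, forall i j, \sum_(k in U) a i k * b k j = (i == j)%:R}.

Lemma pivot_inverse A X : \det (row_replace A X) != 0 -> inverse_on X A (pivot A X).
Proof.
move=> nzQ i j iX jX; have unitQ : row_replace A X \in unitmx by rewrite unitmxE unitfE.
set Qi := invmx (row_replace A X).
have pivotE k : k \in X -> pivot A X k j = Qi (enum_rank k) (enum_rank j).
  by move=> kX; rewrite /pivot row_replace_mulmx_out // enum_rankK inE kX.
have QiE k : k \notin X -> Qi (enum_rank k) (enum_rank j) = 0.
  move=> kX; rewrite -(@row_replace_mulmx_out A X Qi) ?enum_rankK // mulmxV // mxE.
  by rewrite (inj_eq enum_rank_inj); case: eqP kX => // ->; rewrite jX.
have := congr1 (fun M : 'M[K]_#|E| => M (enum_rank i) (enum_rank j)) (mulmxV unitQ).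
rewrite /= !mxE (inj_eq enum_rank_inj) => <-.
rewrite [RHS](reindex enum_rank) /=; last exact: onW_bij (enum_rank_bij E).
rewrite [RHS](bigID (mem X)) /= [X in _ = _ + X]big1 ?addr0 => [|k kX]; last first.
  by rewrite QiE ?mulr0.
by apply: eq_bigr => k kX; rewrite pivotE // !mxE !enum_rankK iX.
Qed.

Definition pair_minor a x y :=
  if x == y then a x x else a x x * a y y - a x y * a y x.

Lemma det_principal_submx_pair a x y :
  \det (principal_submx a [set x; y]) = pair_minor a x y.
Proof.
have xxy : x \in [set x; y] by rewrite !inE eqxx.
have yxy : y \in [set x; y] by rewrite !inE eqxx orbT.
rewrite /pair_minor; case: eqVneq => [<-|nxy].
  have xx : x \in [set x; x] by rewrite !inE eqxx.
  by rewrite (det_mx1 _ (enum_rank_in xx x)) ?cards2 ?eqxx // mxE enum_rankK_in.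
rewrite (det_mx2 _ (i0 := enum_rank_in xxy x) (i1 := enum_rank_in xxy y)) ?cards2 ?nxy //.
  by rewrite !mxE !enum_rankK_in.
by apply: contra nxy => /eqP/(congr1 enum_val); rewrite !enum_rankK_in // => ->.
Qed.

Hypothesis char2 : 2%N \in [pchar K].

Lemma row_replace_trmx_mulC A X : symmetric_mx A ->
  (row_replace A X)^T *m row_replace A (~: X) =
  (row_replace A (~: X))^T *m row_replace A X.
Proof.
move=> symA; apply/matrixP => i j.
(* The two sides differ by 2 A_ij where exactly one of i, j lies in X. *)
have := row_replace_trmx_mul A (~: X) i j; rewrite setCK => ->.
rewrite row_replace_trmx_mul !inE symA.
by case: (enum_val i \in X); case: (enum_val j \in X);
  rewrite /= ?addr0 ?add0r ?(addrr_pchar2 char2).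
Qed.

Lemma pivot_symmetric A X : symmetric_mx A -> \det (row_replace A X) != 0 ->
  symmetric_mx (pivot A X).
Proof.
move=> symA nzQ; have unitQ : row_replace A X \in unitmx by rewrite unitmxE unitfE.
set Q := row_replace A X; set S := row_replace A (~: X).
have trP : (S *m invmx Q)^T = S *m invmx Q.
  rewrite trmx_mul trmx_inv -[S^T](mulmxK unitQ) -row_replace_trmx_mulC //.
  by rewrite mulmxA mulKmx ?unitmx_tr.
by move=> e f; rewrite /pivot -[in LHS]trP mxE.
Qed.

Lemma inverse_onC a b U : symmetric_mx a -> symmetric_mx b ->
  inverse_on U a b -> inverse_on U b a.
Proof.
move=> syma symb invab i j iU jU; rewrite eq_sym -invab //.
by apply: eq_bigr => k _; rewrite mulrC syma symb.
Qed.

Lemma inverse_on_pair_zero_diag a b U x : symmetric_mx a -> symmetric_mx b ->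
  inverse_on U a b -> x \in U -> a x x = 0 ->
  exists2 y, y \in U & (pair_minor a x y != 0) && (pair_minor b x y != 0).
Proof.
move=> syma symb invab xU axx.
(* y is found as a nonzero term of sum_y a_xy^2 det b[{x,y}] = 1; it differs
   from x because a_xx = 0, and then det a[{x,y}] = a_xy^2. *)
pose F y := a x y ^+ 2 * (b x x * b y y + b x y ^+ 2).
have diag_sum : \sum_(y in U) a x y ^+ 2 * b y y = 0.
  transitivity (\sum_(y in U) \sum_(z in U) a x y * b y z * a z x).
    rewrite sum_symmetric_pchar2 // => [|y z]; last first.
      by rewrite (syma x z) (symb z y) (syma y x); ring.
    by apply: eq_bigr => y _; rewrite (syma y x); ring.
  rewrite exchange_big /=; under eq_bigr => z zU do rewrite -big_distrl /= invab //.
  rewrite (big_setD1 x xU) /= eqxx mul1r axx add0r big1 // => z.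
  by rewrite !inE => /andP[zx _]; rewrite eq_sym (negbTE zx) mul0r.
have sumF : \sum_(y in U) F y = 1.
  have frob (g : E -> K) : (\sum_(y in U) g y) ^+ 2 = \sum_(y in U) g y ^+ 2.
    exact: (rmorph_sum (pFrobenius_aut char2)).
  transitivity (b x x * \sum_(y in U) a x y ^+ 2 * b y y +
                \sum_(y in U) (a x y * b y x) ^+ 2).
    rewrite big_distrr -big_split /=; apply: eq_bigr => y _.
    by rewrite /F (symb y x); ring.
  by rewrite diag_sum mulr0 add0r -frob invab // eqxx expr1n.
have [y yU Fy] : exists2 y, y \in U & F y != 0.
  apply/exists_inP; apply: contraLR (oner_neq0 K) => /exists_inPn F0.
  by rewrite -sumF big1 ?eqxx // => y /F0/negPn/eqP.
move: Fy; rewrite mulf_eq0 negb_or => /andP[axy bxy].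
exists y => //; rewrite /pair_minor; case: (eqVneq x y) axy => [<-|_ axy].
  by rewrite axx expr2 mul0r eqxx.
rewrite axx mul0r sub0r oppr_eq0 (syma y x) -expr2 axy /=.
by rewrite (symb y x) -expr2 (oppr_pchar2 char2).
Qed.

Lemma inverse_on_pair_DA a b U x : symmetric_mx a -> symmetric_mx b ->
  inverse_on U a b -> x \in U ->
  exists2 y, y \in U & ([set x; y] \in DA a) && ([set x; y] \in DA b).
Proof.
move=> syma symb invab xU.
suff [y yU nz] : exists2 y, y \in U & (pair_minor a x y != 0) && (pair_minor b x y != 0).
  by exists y; rewrite // !inE /nonsingular_principal !det_principal_submx_pair.
have [axx|nz_axx] := eqVneq (a x x) 0; first exact: inverse_on_pair_zero_diag.
have [bxx|nz_bxx] := eqVneq (b x x) 0.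
  have invba := inverse_onC syma symb invab.
  have [y yU /andP[nzb nza]] := inverse_on_pair_zero_diag symb syma invba xU bxx.
  by exists y => //; rewrite nza.
by exists x => //; rewrite /pair_minor eqxx nz_axx nz_bxx.
Qed.

Lemma strong_delta_matroid_DA A : symmetric_mx A -> strong_delta_matroid (DA A).
Proof.
move=> symA; split.
  by apply/set0Pn; exists set0; rewrite in_DA row_replace0 det1 oner_neq0.
move=> B1 B2 x; rewrite !in_DA => nzB1 nzB2.
set U := symdiff B1 B2 => xU.
have UB1 : symdiff U B1 = B2 by rewrite /U symdiffC symdiffKl.
have nzU : \det (row_replace (pivot A B1) U) != 0.
  by move: nzB2; rewrite -UB1 -(det_pivot _ nzB1) mulf_eq0 negb_or => /andP[].
have symP1 := pivot_symmetric symA nzB1.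
have symP2 := pivot_symmetric symP1 nzU.
have [y yU /andP[]] := inverse_on_pair_DA symP1 symP2 (pivot_inverse nzU) xU.
rewrite !in_DA => nz1 nz2; exists y; rewrite !in_DA; split=> //; split.
  by rewrite symdiffC -(det_pivot _ nzB1) mulf_neq0.
have -> : symdiff B2 [set x; y] = symdiff (symdiff [set x; y] U) B1.
  by rewrite -symdiffA UB1 symdiffC.
by rewrite -(det_pivot _ nzB1) -(det_pivot _ nzU) !mulf_neq0.
Qed.

End PrincipalPivot.

Lemma skew_symmetric_mx_pchar2 (K : fieldType) (E : finType) (A : E -> E -> K) :
  2%N \in [pchar K] -> skew_symmetric_mx A -> symmetric_mx A.
Proof. by move=> char2 [skewA _] i j; rewrite skewA (oppr_pchar2 char2). Qed.

Unset Implicit Arguments.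
Local Close Scope ring_scope.

Theorem proposition2p31 (K : finFieldType) (Hchar : (2%N \in [pchar K]%R))
  (E : finType) (B : {set {set E}}) :
  delta_matroid B -> representable_over K B -> strong_delta_matroid B.
Proof.
move=> _ [A [X [sym_or_skew ->]]]; apply: strong_delta_matroid_twist.
apply: (strong_delta_matroid_DA Hchar).
by case: sym_or_skew => // /(skew_symmetric_mx_pchar2 Hchar).
Qed.
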